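(* Let $R$ be a commutative ring with identity whose set of zero-divisors $Z_R$ satisfies $Z_R\ne\{0\}$, let $n>1$, and let $r$ be the radius of the orthogonality graph $O(M_n(R))$. Then: (1) $2\le r\le 4$; (2) if $$\forall a_0\in Z_R\ \ \exists a_1,a_2\in R\setminus\{0\}\ \ \forall i,j\in\{0,1,2\},\ i\ne j:\ a_ia_j=0,$$ then $r\in\{2,3\}$; (3) $r=2$ if and only if there exists $c\in R\setminus\{0\}$ such that $\operatorname{Ann}(c)\cap\operatorname{Ann}(a)\ne 0$ for every $a\in Z_R$.
   Context: All rings are associative with identity. For a commutative ring $R$, $Z_R$ is the set of zero-divisors (including $0$) and $\operatorname{Ann}(a)=\{x\in R: ax=0\}$. The orthogonality graph $O(S)$ of a ring $S$ is the undirected graph whose vertices are the nonzero two-sided zero-divisors of $S$ (elements $x$ with $xy=0$ and $zx=0$ for some nonzero $y,z$), distinct vertices $x,y$ being adjacent iff $xy=yx=0$. $d(x,y)$ is graph distance, the eccentricity of a vertex $v$ is $\sup_w d(v,w)$ over all vertices $w$, and the radius is the minimum eccentricity over all vertices. *)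

From HB Require Import structures.
From mathcomp Require Import all_boot all_order all_algebra.
Set Implicit Arguments. Unset Strict Implicit. Unset Printing Implicit Defensive.
Import GRing.Theory.
Local Open Scope ring_scope.

Definition zero_divisor (R : comNzRingType) (a : R) : Prop :=
  exists x : R, x != 0 /\ a * x = 0.

Definition overtex (R : comNzRingType) (n : nat) (x : 'M[R]_n) : Prop :=
  x != 0 /\ (exists y : 'M[R]_n, y != 0 /\ x *m y = 0)
         /\ (exists z : 'M[R]_n, z != 0 /\ z *m x = 0).

Definition oadj (R : comNzRingType) (n : nat) (x y : 'M[R]_n) : Prop :=
  overtex x /\ overtex y /\ x != y /\ x *m y = 0 /\ y *m x = 0.

(* owithin k x y : d(x,y) <= k in O(M_n(R)). *)
Fixpoint owithin (R : comNzRingType) (n : nat) (k : nat) (x y : 'M[R]_n) : Prop :=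
  match k with
  | 0 => x = y
  | k'.+1 => owithin k' x y \/ exists z, owithin k' x z /\ oadj z y
  end.

Definition ecc_le (R : comNzRingType) (n : nat) (v : 'M[R]_n) (k : nat) : Prop :=
  forall w : 'M[R]_n, overtex w -> owithin k v w.

(* The radius of O(M_n(R)) is the (finite) natural number r:
   some vertex has eccentricity <= r, and every vertex has eccentricity >= r. *)
Definition is_radius (R : comNzRingType) (n : nat) (r : nat) : Prop :=
  (exists v : 'M[R]_n, overtex v /\ ecc_le v r) /\
  (forall v : 'M[R]_n, overtex v -> forall k, ecc_le v k -> (r <= k)%N).

(* The determinant of a vertex W of O(M_n(R)) is a zero-divisor, and conversely
   every x <> 0 with x * det W = 0 yields a nonzero matrix x A orthogonal to W on
   both sides (McCoy): pick t such that x kills all (t+1) x (t+1) minors of W but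
   not some t x t minor, and let A be the adjugate of a (t+1) x (t+1) submatrix
   bordering that minor, put back into n x n shape; by Laplace expansion,
   x A W = W x A = 0.  So every vertex W is reached from E_11 along
   E_11 - x E_22 - d I - x A - W with d <> 0 and d x = 0; under the triangle
   condition along E_11 - a2 E_22 - a1 A - W; and if Ann(c) meets every Ann(a),
   from c I in two steps.  No vertex v has eccentricity 1, as v E_lm <> 0 for some
   matrix unit.  Conversely, if V has eccentricity 2, compare V with the twisted
   transposition matrices T_a (a a zero-divisor), whose neighbours are the z E_kl
   with a z = 0: a common neighbour of V and T_a gives z <> 0 with a z = 0 and
   z V_lm = 0 for a fixed nonzero entry V_lm of V. *)

From HB Require Import structures.
From mathcomp Require Import all_boot all_order all_algebra ring zify.
From Stdlib Require Import Classical.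
Set Implicit Arguments. Unset Strict Implicit. Unset Printing Implicit Defensive.
Import GRing.Theory.
Local Open Scope ring_scope.

Lemma exists_minimal_nat (P : nat -> Prop) : (exists k, P k) ->
  exists m, P m /\ forall k, P k -> (m <= k)%N.
Proof.
move=> [k Pk]; elim/ltn_ind: k Pk => k IH Pk.
case: (classic (exists j, P j /\ (j < k)%N)) => [[j [Pj ltjk]]|noP]; first exact: IH Pj.
exists k; split=> // j Pj; rewrite leqNgt; apply/negP => ltjk; apply: noP; exists j; done.
Qed.

Lemma exists_notin_codom t n (f : 'I_t -> 'I_n) : (t < n)%N -> exists p, forall j, f j != p.
Proof.
move=> ltn; have : (0 < #|[predC codom f]|)%N.
  rewrite -(leq_add2l #|codom f|) cardC card_ord addn1.
  by rewrite (leq_ltn_trans (card_size _)) // size_codom card_ord.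
case/card_gt0P => p; rewrite inE => p_notin; exists p => j.
by apply: contraNneq p_notin => <-; apply: codom_f.
Qed.

Definition ord_extend t n (f : 'I_t -> 'I_n) (p : 'I_n) : 'I_t.+1 -> 'I_n :=
  fun i => if unlift ord_max i is Some j then f j else p.

Lemma ord_extend_lift t n (f : 'I_t -> 'I_n) p j : ord_extend f p (lift ord_max j) = f j.
Proof. by rewrite /ord_extend liftK. Qed.

Lemma ord_extend_max t n (f : 'I_t -> 'I_n) p : ord_extend f p ord_max = p.
Proof. by rewrite /ord_extend unlift_none. Qed.

Section Minors.

Variable R : comNzRingType.

Lemma cofactor_eq_off_row m (A B : 'M[R]_m.+1) i j :
  (forall k l, k != i -> A k l = B k l) -> cofactor A i j = cofactor B i j.
Proof.
move=> eqAB; rewrite /cofactor; congr (_ * \det _); apply/matrixP => k l.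
by rewrite !mxE eqAB // eq_sym neq_lift.
Qed.

Lemma cofactor_eq_off_col m (A B : 'M[R]_m.+1) i j :
  (forall k l, l != j -> A k l = B k l) -> cofactor A i j = cofactor B i j.
Proof.
move=> eqAB; rewrite /cofactor; congr (_ * \det _); apply/matrixP => k l.
by rewrite !mxE eqAB // eq_sym neq_lift.
Qed.

Variables (n : nat) (W : 'M[R]_n).

Lemma det_mxsub_annihilated x (f g : 'I_n -> 'I_n) :
  x * \det W = 0 -> x * \det (mxsub f g W) = 0.
Proof.
move=> xW0; have -> : mxsub f g W = rowsub f 1%:M *m W *m colsub g 1%:M.
  by rewrite -mulmxA mulmx_colsub mulmx1 -mxsub_mul mul1mx.
rewrite !det_mulmx.
transitivity (\det (rowsub f 1%:M) * (x * \det W) * \det (colsub g (1%:M : 'M[R]_n))).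
  by ring.
by rewrite xW0 mulr0 mul0r.
Qed.

Section KilledMinors.

Variables (t : nat) (x : R).
Hypothesis minors0 : forall f g : 'I_t.+1 -> 'I_n, x * \det (mxsub f g W) = 0.

(* Entry (r, i) is [x] times the Laplace expansion, along row [i], of the minor
   whose row [i] is replaced by row [r] of [W]. *)
Lemma scale_colsub_mul_adj_eq0 (f g : 'I_t.+1 -> 'I_n) :
  x *: (colsub g W *m \adj (mxsub f g W)) = 0.
Proof.
apply/matrixP => r i; rewrite !mxE.
have := minors0 (fun k => if k == i then r else f k) g.
rewrite (expand_det_row _ i) => e; rewrite -[RHS]e; congr (_ * _); apply: eq_bigr => j _.
rewrite !mxE eqxx; congr (_ * _); apply: cofactor_eq_off_row => k l /negbTE ki.
by rewrite !mxE ki.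
Qed.

Lemma scale_adj_mul_rowsub_eq0 (f g : 'I_t.+1 -> 'I_n) :
  x *: (\adj (mxsub f g W) *m rowsub f W) = 0.
Proof.
apply/matrixP => j c; rewrite !mxE.
have := minors0 f (fun k => if k == j then c else g k).
rewrite (expand_det_col _ j) => e; rewrite -[RHS]e; congr (_ * _); apply: eq_bigr => i _.
rewrite !mxE eqxx mulrC; congr (_ * _); apply: cofactor_eq_off_col => k l /negbTE lj.
by rewrite !mxE lj.
Qed.

Lemma embedded_adj_entry (f g : 'I_t -> 'I_n) p q (B : 'M[R]_t.+1) :
  (forall j, f j != p) -> (forall j, g j != q) ->
  (colsub (ord_extend g q) 1%:M *m B *m rowsub (ord_extend f p) 1%:M) q p
    = B ord_max ord_max.
Proof.
move=> fp gq; rewrite mxE (bigD1 ord_max) //= big1 ?addr0; last first.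
  move=> i; rewrite eq_sym => /unlift_some[i' -> _].
  by rewrite !mxE ord_extend_lift (negbTE (fp i')) mulr0.
rewrite !mxE ord_extend_max eqxx mulr1 (bigD1 ord_max) //= big1 ?addr0; last first.
  move=> j; rewrite eq_sym => /unlift_some[j' -> _].
  by rewrite !mxE ord_extend_lift eq_sym (negbTE (gq j')) mul0r.
by rewrite !mxE ord_extend_max eqxx mul1r.
Qed.

(* [p] and [q] are fresh, so the entry [(q, p)] of the embedded adjugate is the
   surviving minor. *)
Lemma annihilator_of_minor (f g : 'I_t -> 'I_n) :
  (t < n)%N -> x * \det (mxsub f g W) != 0 ->
  exists A : 'M[R]_n, x *: A != 0 /\ W *m (x *: A) = 0 /\ (x *: A) *m W = 0.
Proof.
move=> ltn minor_nz.
have [p fp] := exists_notin_codom f ltn; have [q gq] := exists_notin_codom g ltn.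
pose f' := ord_extend f p; pose g' := ord_extend g q.
exists (colsub g' 1%:M *m \adj (mxsub f' g' W) *m rowsub f' 1%:M); split; last split.
- apply: contraNneq minor_nz => /matrixP /(_ q p).
  rewrite mxE embedded_adj_entry // mxE /cofactor mxE.
  have -> : row' ord_max (col' ord_max (mxsub f' g' W)) = mxsub f g W.
    by apply/matrixP => k l; rewrite !mxE /f' /g' !ord_extend_lift.
  by rewrite -signr_odd addnn odd_double expr0 mul1r => ->.
- by rewrite -scalemxAr !mulmxA mulmx_colsub mulmx1 scalemxAl
    scale_colsub_mul_adj_eq0 mul0mx.
- by rewrite -scalemxAl -!mulmxA mul_rowsub_mx mul1mx scalemxAr
    scale_adj_mul_rowsub_eq0 mulmx0.
Qed.

End KilledMinors.

Lemma det_annihilator_two_sided x : x != 0 -> x * \det W = 0 ->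
  exists A : 'M[R]_n, x *: A != 0 /\ W *m (x *: A) = 0 /\ (x *: A) *m W = 0.
Proof.
move=> x_nz xW.
suff: forall s, (s <= n)%N -> (forall f g : 'I_s -> 'I_n, x * \det (mxsub f g W) = 0) ->
    exists A : 'M[R]_n, x *: A != 0 /\ W *m (x *: A) = 0 /\ (x *: A) *m W = 0.
  by apply; [exact: leqnn | move=> f g; apply: det_mxsub_annihilated].
elim=> [|t IH] le_sn minors0.
  have := minors0 (widen_ord (leq0n n)) (widen_ord (leq0n n)).
  by rewrite det_mx00 mulr1 => /eqP; rewrite (negbTE x_nz).
have [|not_all] := classic (forall f g : 'I_t -> 'I_n, x * \det (mxsub f g W) = 0).
  exact: IH (ltnW le_sn).
have [f /not_all_ex_not [g /eqP minor_nz]] := not_all_ex_not _ _ not_all.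
exact: (annihilator_of_minor minors0 le_sn minor_nz).
Qed.

End Minors.

Definition zero_divisor_triangles (R : comNzRingType) : Prop :=
  forall a0 : R, zero_divisor a0 ->
    exists a1 a2 : R, a1 != 0 /\ a2 != 0 /\
      a0 * a1 = 0 /\ a1 * a0 = 0 /\ a0 * a2 = 0 /\ a2 * a0 = 0 /\
      a1 * a2 = 0 /\ a2 * a1 = 0.

Definition meets_all_annihilators (R : comNzRingType) (c : R) : Prop :=
  c != 0 /\ forall a, zero_divisor a -> exists x, x != 0 /\ c * x = 0 /\ a * x = 0.

Section OrthogonalityGraph.

Variables (R : comNzRingType) (n : nat).
Implicit Types (u v w : 'M[R]_n).

Definition ostep u v := u = v \/ oadj u v.

Lemma owithinS_ostep k u v w : owithin k u v -> ostep v w -> owithin k.+1 u w.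
Proof. by move=> uv [<-|vw]; [left | right; exists v]. Qed.

Lemma overtex_orth u v : u != 0 -> v != 0 -> u *m v = 0 -> v *m u = 0 -> overtex u.
Proof. by move=> u_nz v_nz uv vu; split=> //; split; exists v. Qed.

Lemma ostep_orth u v : u != 0 -> v != 0 -> u *m v = 0 -> v *m u = 0 -> ostep u v.
Proof.
move=> u_nz v_nz uv vu; have [->|neq_uv] := eqVneq u v; first by left.
by right; split; [exact: overtex_orth uv vu | split; [exact: overtex_orth vu uv|]].
Qed.

Lemma ostep_scale (a b : R) u v : a * b = 0 -> a *: u != 0 -> b *: v != 0 ->
  ostep (a *: u) (b *: v).
Proof.
move=> ab0 au_nz bv_nz; apply: ostep_orth => //;
  rewrite -scalemxAl -scalemxAr scalerA ?ab0 ?(mulrC b) ?ab0 scale0r //.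
Qed.

Lemma mx_neq0_entry v : v != 0 -> exists k l, v k l != 0.
Proof.
move=> v_nz; apply: NNPP => no_entry; move/eqP: v_nz; apply; apply/matrixP => k l.
rewrite mxE; apply: NNPP => vkl_nz; apply: no_entry; exists k, l; exact/eqP.
Qed.

Lemma overtex_det_zero_divisor w : overtex w -> zero_divisor (\det w).
Proof.
move=> [_ [[v [v_nz wv]] _]].
have detw_v : \det w *: v = 0 by rewrite -mul_scalar_mx -mul_adj_mx -mulmxA wv mulmx0.
have [k [l vkl_nz]] := mx_neq0_entry v_nz; exists (v k l); split=> //.
by move/matrixP: detw_v => /(_ k l); rewrite !mxE.
Qed.

Lemma ostep_det_annihilator w x : overtex w -> x != 0 -> x * \det w = 0 ->
  exists A, x *: A != 0 /\ ostep (x *: A) w.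
Proof.
move=> [w_nz _] x_nz xw; have [A [xA_nz [wA Aw]]] := det_annihilator_two_sided x_nz xw.
by exists A; split=> //; apply: ostep_orth.
Qed.

Variables (i0 i1 : 'I_n).
Hypothesis i01 : i0 != i1.

Lemma exists_neq_ord (a : 'I_n) : exists b, b != a.
Proof. by have [<-|] := eqVneq i0 a; [exists i1; rewrite eq_sym | exists i0]. Qed.

Lemma overtex_scale_delta (a : R) l m : a != 0 -> overtex (a *: delta_mx l m : 'M[R]_n).
Proof.
move=> a_nz; have [p pm] := exists_neq_ord m; have [q ql] := exists_neq_ord l.
split; last split.
- by apply: contraNneq a_nz => /matrixP /(_ l m); rewrite !mxE !eqxx /= mulr1 => ->.
- exists (delta_mx p p); split; last by rewrite -scalemxAl mul_delta_mx_0 ?scaler0 // eq_sym.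
  by apply/negP => /eqP /matrixP /(_ p p); rewrite !mxE !eqxx => /eqP; rewrite oner_eq0.
- exists (delta_mx q q); split; last by rewrite -scalemxAr mul_delta_mx_0 ?scaler0.
  by apply/negP => /eqP /matrixP /(_ q q); rewrite !mxE !eqxx => /eqP; rewrite oner_eq0.
Qed.

Lemma mulmx_delta_entry (A : 'M[R]_n) (k l m : 'I_n) : (A *m delta_mx l m) k m = A k l.
Proof.
rewrite mxE (bigD1 l) //= big1 ?addr0 => [|j /negbTE jl]; rewrite !mxE ?jl ?mulr0 //.
by rewrite !eqxx mulr1.
Qed.

Lemma ecc_le_ge2 v k : overtex v -> ecc_le v k -> (2 <= k)%N.
Proof.
move=> v_vtx ecc_vk; have [r [l vrl_nz]] := mx_neq0_entry (proj1 v_vtx).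
have [m delta_neq_v] : exists m, delta_mx l m != v.
  have [delta0_v|] := eqVneq (delta_mx l i0) v; last by exists i0.
  exists i1; rewrite -delta0_v; apply/negP => /eqP /matrixP /(_ l i1).
  by rewrite !mxE !eqxx eq_sym (negbTE i01) => /eqP; rewrite oner_eq0.
have w_vtx : overtex (delta_mx l m : 'M[R]_n).
  by have := overtex_scale_delta l m (oner_neq0 R); rewrite scale1r.
have v_delta_nz : v *m delta_mx l m != 0.
  by apply: contraNneq vrl_nz => /matrixP /(_ r m); rewrite mulmx_delta_entry mxE => ->.
have v_neq : v <> delta_mx l m by move=> v_eq; move: delta_neq_v; rewrite v_eq eqxx.
move: ecc_vk => /(_ _ w_vtx); case: k => [|[|k]] //=.
case=> [e|[u [<- [_ [_ [_ [v_delta _]]]]]]]; first by case: v_neq.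
by move: v_delta_nz; rewrite v_delta eqxx.
Qed.

Lemma scalar_mx_neq0 (c : R) : c != 0 -> (c%:M : 'M[R]_n) != 0.
Proof.
by move=> c_nz; apply: contraNneq c_nz => /matrixP /(_ i0 i0); rewrite !mxE eqxx mulr1n => ->.
Qed.

Lemma overtex_scalar (c : R) : meets_all_annihilators c -> overtex (c%:M : 'M[R]_n).
Proof.
move=> [c_nz ann].
have [x [x_nz [cx _]]] := ann 0 (ex_intro _ 1 (conj (oner_neq0 R) (mul0r 1))).
apply: (overtex_orth (v := x%:M)); rewrite ?scalar_mx_neq0 //;
  by rewrite -scalar_mxM ?[x * c]mulrC cx raddf0.
Qed.

Lemma ecc_le_scalar2 (c : R) : meets_all_annihilators c -> ecc_le (c%:M : 'M[R]_n) 2.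
Proof.
move=> [c_nz ann] w w_vtx.
have [x0 [x0_nz [cx0 wx0]]] := ann _ (overtex_det_zero_divisor w_vtx).
have [A [x0A_nz x0A_w]] := ostep_det_annihilator w_vtx x0_nz (etrans (mulrC _ _) wx0).
apply: owithinS_ostep x0A_w; apply: (owithinS_ostep (v := c%:M)) => //.
by rewrite -scalemx1; apply: ostep_scale; rewrite ?scalemx1 ?scalar_mx_neq0.
Qed.

Lemma overtex_delta : overtex (delta_mx i0 i0 : 'M[R]_n).
Proof. by have := overtex_scale_delta i0 i0 (oner_neq0 R); rewrite scale1r. Qed.

Lemma ostep_delta_scale (a : R) : a != 0 -> ostep (delta_mx i0 i0) (a *: delta_mx i1 i1).
Proof.
move=> a_nz; apply: ostep_orth; first exact: (proj1 overtex_delta).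
- exact: (proj1 (overtex_scale_delta i1 i1 a_nz)).
- by rewrite -scalemxAr mul_delta_mx_0 ?scaler0.
- by rewrite -scalemxAl mul_delta_mx_0 ?scaler0 // eq_sym.
Qed.

Lemma ecc_le_delta4 (a0 : R) :
  a0 != 0 -> zero_divisor a0 -> ecc_le (delta_mx i0 i0 : 'M[R]_n) 4.
Proof.
move=> a0_nz [y [y_nz a0y]] w w_vtx.
have [d [x0 [d_nz [x0_nz [dx0 x0w]]]]] :
    exists d x0, d != 0 /\ x0 != 0 /\ d * x0 = 0 /\ x0 * \det w = 0.
  have [detw0|detw_nz] := eqVneq (\det w) 0.
    by exists a0, y; rewrite detw0 mulr0; do !split.
  have [z [z_nz detw_z]] := overtex_det_zero_divisor w_vtx.
  by exists (\det w), z; rewrite [z * _]mulrC; do !split.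
have [A [x0A_nz x0A_w]] := ostep_det_annihilator w_vtx x0_nz x0w.
apply: owithinS_ostep x0A_w.
apply: (owithinS_ostep (v := d *: 1%:M)); last first.
  by apply: ostep_scale; rewrite ?scalemx1 ?scalar_mx_neq0.
apply: (owithinS_ostep (v := x0 *: delta_mx i1 i1)); last first.
  have x0E_nz := proj1 (overtex_scale_delta i1 i1 x0_nz).
  by apply: ostep_scale; rewrite ?scalemx1 ?scalar_mx_neq0 // mulrC.
by apply: (owithinS_ostep (v := delta_mx i0 i0)) => //; apply: ostep_delta_scale.
Qed.

Lemma ecc_le_delta3 : zero_divisor_triangles R -> ecc_le (delta_mx i0 i0 : 'M[R]_n) 3.
Proof.
move=> triangles w w_vtx.
have [a1 [a2 [a1_nz [a2_nz [_ [a1w [_ [_ [a12 _]]]]]]]]] :=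
  triangles _ (overtex_det_zero_divisor w_vtx).
have [A [a1A_nz a1A_w]] := ostep_det_annihilator w_vtx a1_nz a1w.
apply: owithinS_ostep a1A_w.
apply: (owithinS_ostep (v := a2 *: delta_mx i1 i1)); last first.
  by apply: ostep_scale; rewrite ?(proj1 (overtex_scale_delta _ _ a2_nz)) // mulrC.
by apply: (owithinS_ostep (v := delta_mx i0 i0)) => //; apply: ostep_delta_scale.
Qed.

End OrthogonalityGraph.

Section Twist.

Variables (R : comNzRingType) (n : nat).

(* The permutation matrix of the transposition (k l), with entry [(l, k)] replaced by [a]. *)
Definition twist_mx (k l : 'I_n) (a : R) : 'M[R]_n :=
  \matrix_(i, j) (if (i == k) && (j == l) then 1 else if (i == l) && (j == k) then a
                  else if (i == j) && (i != k) && (i != l) then 1 else 0).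

Variables (k l : 'I_n).
Hypothesis kl : k != l.

Lemma twist_mx_kl a : twist_mx k l a k l = 1.
Proof. by rewrite mxE !eqxx. Qed.

Lemma twist_mx_lk a : twist_mx k l a l k = a.
Proof. by rewrite mxE !eqxx eq_sym (negbTE kl). Qed.

Lemma twist_mx_ll a : twist_mx k l a l l = 0.
Proof. by rewrite mxE !eqxx eq_sym (negbTE kl) /= ?andbF. Qed.

Lemma twist_mx_mul_eq0 a (Y : 'M[R]_n) : twist_mx k l a *m Y = 0 ->
  (forall r m, r != k -> Y r m = 0) /\ (forall m, a * Y k m = 0).
Proof.
move=> tY; have {}tY r m : (twist_mx k l a *m Y) r m = 0 by rewrite tY mxE.
split=> [r m rk|m].
  have [->|rl] := eqVneq r l.
    have := tY k m; rewrite mxE (bigD1 l) //= big1 ?addr0 => [|j jl].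
      by rewrite mxE !eqxx mul1r.
    by rewrite mxE eqxx (negbTE jl) (negbTE kl) /= andbF mul0r.
  have := tY r m; rewrite mxE (bigD1 r) //= big1 ?addr0 => [|j jr].
    by rewrite mxE (negbTE rk) (negbTE rl) eqxx mul1r.
  by rewrite mxE (negbTE rk) (negbTE rl) /= eq_sym (negbTE jr) mul0r.
have := tY l m; rewrite mxE (bigD1 k) //= big1 ?addr0 => [|j jk].
  by rewrite mxE eq_sym (negbTE kl) !eqxx.
by rewrite mxE eq_sym (negbTE kl) eqxx (negbTE jk) /= !andbF mul0r.
Qed.

Lemma mul_twist_mx_eq0 a (Y : 'M[R]_n) : Y *m twist_mx k l a = 0 ->
  (forall r m, m != l -> Y r m = 0) /\ (forall r, Y r l * a = 0).
Proof.
have lk : l != k by rewrite eq_sym.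
move=> Yt; have {}Yt r m : (Y *m twist_mx k l a) r m = 0 by rewrite Yt mxE.
split=> [r m ml|r].
  have [->|mk] := eqVneq m k.
    have := Yt r l; rewrite mxE (bigD1 k) //= big1 ?addr0 => [|j jk].
      by rewrite mxE !eqxx mulr1.
    rewrite mxE (negbTE jk) eqxx /=.
    by have [->|jl] := eqVneq j l; rewrite /= ?(negbTE lk) mulr0.
  have := Yt r m; rewrite mxE (bigD1 m) //= big1 ?addr0 => [|j jm].
    by rewrite mxE (negbTE ml) (negbTE mk) eqxx mulr1.
  by rewrite mxE (negbTE ml) (negbTE mk) /= !andbF (negbTE jm) mulr0.
have := Yt r k; rewrite mxE (bigD1 l) //= big1 ?addr0 => [|j jl].
  by rewrite mxE (negbTE lk) !eqxx.
rewrite mxE (negbTE jl) (negbTE kl) eqxx /= andbF.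
by have [->|jk] := eqVneq j k; rewrite /= ?eqxx ?andbF mulr0.
Qed.

Lemma overtex_twist_mx a : zero_divisor a -> overtex (twist_mx k l a).
Proof.
move=> [y [y_nz ay]]; have lk : l != k by rewrite eq_sym.
apply: (overtex_orth (v := y *: delta_mx k l)).
- apply: contraTneq isT => /matrixP /(_ k l).
  by rewrite twist_mx_kl mxE => /eqP; rewrite oner_eq0.
- by apply: contraNneq y_nz => /matrixP /(_ k l); rewrite !mxE !eqxx mulr1 => ->.
- apply/matrixP => r m; rewrite !mxE (bigD1 k) //= big1 ?addr0 => [|j jk]; last first.
    by rewrite !mxE (negbTE jk) /= !mulr0.
  rewrite !mxE eqxx (negbTE kl) andbF /=.
  by have [->|rl] := eqVneq r l; rewrite /= ?andbT ?andbN ?mulrA ?ay ?mul0r.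
- apply/matrixP => r m; rewrite !mxE (bigD1 l) //= big1 ?addr0 => [|j jl]; last first.
    by rewrite !mxE (negbTE jl) andbF /= mulr0 mul0r.
  rewrite !mxE eqxx (negbTE lk) /=.
  by rewrite andbT; case: (m == k); rewrite ?andbF ?mulr0 // mulrAC (mulrC y) ay mul0r.
Qed.

Lemma twist_mx1_not_overtex : ~ overtex (twist_mx k l 1).
Proof.
move=> [_ [[Y [Y_nz tY]] _]]; have [Yrows Yk] := twist_mx_mul_eq0 tY.
move/eqP: Y_nz; apply; apply/matrixP => r m; rewrite mxE.
have [->|rk] := eqVneq r k; last exact: Yrows.
by rewrite -[Y k m]mul1r Yk.
Qed.

Lemma ecc_le2_meets_all_annihilators (V : 'M[R]_n) m0 :
  V l m0 != 0 -> (forall a, V != twist_mx k l a) -> ecc_le V 2 ->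
  meets_all_annihilators (V l m0).
Proof.
move=> Vlm_nz V_twist ecc_V; split=> // a za.
have not_oadj : ~ oadj V (twist_mx k l a).
  move=> [_ [_ [_ [_ tV]]]]; have [Vrows _] := twist_mx_mul_eq0 tV.
  by move: Vlm_nz; rewrite Vrows ?eqxx // eq_sym.
have [z [[_ [_ [_ [_ zV]]]] [z_vtx [_ [_ [zt tz]]]]]] :
    exists z, oadj V z /\ oadj z (twist_mx k l a).
  case: (ecc_V _ (overtex_twist_mx za)) =>
    [[V_eq|[_ [<- //]]]|[z [[<- //|[_ [<- Vz]]] zt]]].
    by move: (V_twist a); rewrite V_eq eqxx.
  by exists z.
have [zrows azk] := twist_mx_mul_eq0 tz; have [zcols _] := mul_twist_mx_eq0 zt.
have zkl_nz : z k l != 0.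
  have [r [m zrm_nz]] := mx_neq0_entry (proj1 z_vtx).
  have [rk|] := eqVneq r k; last by move/(zrows r m) => zrm0; rewrite zrm0 eqxx in zrm_nz.
  have [ml|] := eqVneq m l; last by move/(zcols r m) => zrm0; rewrite zrm0 eqxx in zrm_nz.
  by rewrite -rk -ml.
exists (z k l); split=> //; split=> //.
move/matrixP: zV => /(_ k m0); rewrite !mxE (bigD1 l) //= big1 ?addr0 => [|j jl].
  by rewrite mulrC.
by rewrite zcols ?mul0r.
Qed.

End Twist.

Lemma ecc_le2_common_annihilator (R : comNzRingType) n (i0 i1 : 'I_n)
    (V : 'M[R]_n) :
  i0 != i1 -> overtex V -> ecc_le V 2 -> exists c : R, meets_all_annihilators c.
Proof.
move=> i01 V_vtx ecc_V; have [i [j Vij_nz]] := mx_neq0_entry (proj1 V_vtx).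
case: (eqVneq j i) Vij_nz => [<- Vjj_nz|ji Vij_nz].
  have [k ki] := exists_neq_ord i01 j; exists (V j j).
  apply: (ecc_le2_meets_all_annihilators ki) => // a.
  by apply: contraNneq Vjj_nz => ->; rewrite twist_mx_ll.
have [[a Va]|V_twist] := classic (exists a, V = twist_mx j i a); last first.
  exists (V i j); apply: (ecc_le2_meets_all_annihilators ji) => // a.
  by apply/eqP => Va; apply: V_twist; exists a.
have Vji : V j i = 1 by rewrite Va twist_mx_kl.
exists (V j i); apply: (ecc_le2_meets_all_annihilators (k := i) (l := j)) => //.
- by rewrite eq_sym.
- by rewrite Vji oner_eq0.
move=> b; apply/eqP => Vb; apply: (twist_mx1_not_overtex (R := R) ji).
have a1 : a = 1 by rewrite -(twist_mx_lk ji a) -Va Vb twist_mx_kl.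
by rewrite -a1 -Va.
Qed.

Unset Implicit Arguments.

Theorem theorem2 (R : comNzRingType) (n : nat) (hn : (1 < n)%N)
  (hZ : exists a : R, a != 0 /\ zero_divisor a) :
  exists r : nat, is_radius R n r /\
    ((2 <= r <= 4)%N) /\
    ((forall a0 : R, zero_divisor a0 ->
        exists a1 a2 : R, a1 != 0 /\ a2 != 0 /\
          a0 * a1 = 0 /\ a1 * a0 = 0 /\ a0 * a2 = 0 /\ a2 * a0 = 0 /\
          a1 * a2 = 0 /\ a2 * a1 = 0) ->
      r = 2%N \/ r = 3%N) /\
    (r = 2%N <->
      exists c : R, c != 0 /\ forall a : R, zero_divisor a ->
        exists x : R, x != 0 /\ c * x = 0 /\ a * x = 0).
Proof.
pose i0 : 'I_n := Ordinal (ltnW hn); pose i1 : 'I_n := Ordinal hn.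
have i01 : i0 != i1 by [].
have [a0 [a0_nz a0_zd]] := hZ.
pose attained k := exists v : 'M[R]_n, overtex v /\ ecc_le v k.
have delta_attained k : ecc_le (delta_mx i0 i0 : 'M[R]_n) k -> attained k.
  by exists (delta_mx i0 i0); split=> //; apply: overtex_delta i01.
have att4 : attained 4%N := delta_attained _ (ecc_le_delta4 i01 a0_nz a0_zd).
have [r [att_r min_r]] := exists_minimal_nat (ex_intro attained 4%N att4).
have r_ge2 : (2 <= r)%N.
  by case: att_r => v [v_vtx ecc_v]; exact: (ecc_le_ge2 i01 v_vtx ecc_v).
exists r; split; first by split=> // v v_vtx k ecc_v; apply: min_r; exists v.
split; first by rewrite r_ge2 (min_r _ att4).
split.
  move=> triangles; have := min_r _ (delta_attained 3%N (ecc_le_delta3 i01 triangles)).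
  lia.
split=> [r2 | [c c_ann]].
  by case: att_r => v [v_vtx]; rewrite r2; apply: ecc_le2_common_annihilator i01 v_vtx.
have := min_r 2%N (ex_intro _ c%:M (conj (overtex_scalar i0 c_ann) (ecc_le_scalar2 i0 c_ann))).
lia.
Qed.
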